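(* In the safe linear bandit setting with ROFUL as described in the context, suppose $\mathcal{X}$ is star-convex with respect to the origin, $\|x\|\le1$ on $\mathcal{X}$ and $\theta^\top x_*>0$. Then on the event $\mathcal{E}_{\mathrm{conf}}$, for all $t\in[T]$, $$\gamma_t\ge\max\left(1-\frac{2}{b}\beta_t\|x_t\|_{V_t^{-1}},\ \nu\right).$$
   Context: Safe linear bandit setting: at round $t$ the learner plays $x_t$ in a closed set $\mathcal{X}\subseteq\mathbb{R}^d$ and observes $y_t=\theta^\top x_t+\epsilon_t$, $z_t=a^\top x_t+\eta_t$, with $\theta,a$ unknown and $b>0$ known; $\mathcal{Y}=\{x\in\mathcal{X}:a^\top x\le b\}$, $x_*\in\arg\max_{\mathcal{Y}}\theta^\top x$. Constants: $S_a\ge\|a\|$, $S_\theta\ge\|\theta\|$, $S=\max(S_a,S_\theta)$, $\nu=b/S_a\le1$, $\rho>0$, $\delta\in(0,1)$, $\lambda\ge1$. ROFUL: $V_t=\lambda I+\sum_{k<t}x_kx_k^\top$, $\hat a_t=V_t^{-1}\sum_{k<t}x_kz_k$, $\hat\theta_t=V_t^{-1}\sum_{k<t}x_ky_k$, $\beta_t=\rho\sqrt{d\log\left(\frac{1+(t-1)/\lambda}{\delta/2}\right)}+\sqrt\lambda S$, $\|x\|_M=\sqrt{x^\top Mx}$; $\mathcal{Y}_t^p=\{x\in\mathcal{X}:\hat a_t^\top x+\beta_t\|x\|_{V_t^{-1}}\le b\}$, $\mathcal{Y}_t^o=\{x\in\mathcal{X}:\hat a_t^\top x-\beta_t\|x\|_{V_t^{-1}}\le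 b\}$; $\tilde x_t\in\arg\max_{x\in\mathcal{Y}_t^o}(\hat\theta_t^\top x+\beta_t\|x\|_{V_t^{-1}})$; $\tilde b_t=\min(\nu/\|\tilde x_t\|,1)$, $\mu_t=\max\{\mu\in[0,1]:\mu\tilde x_t\in\mathcal{Y}_t^p\}$, $\gamma_t=\max(\tilde b_t,\mu_t)$; play $x_t=\gamma_t\tilde x_t$. $\mathcal{E}_{\mathrm{conf}}$: the event that $|x^\top(\hat\theta_t-\theta)|\le\beta_t\|x\|_{V_t^{-1}}$ and $|x^\top(\hat a_t-a)|\le\beta_t\|x\|_{V_t^{-1}}$ for all $x\in\mathcal{X}$ and all $t\ge1$. *)

From HB Require Import structures.
From mathcomp Require Import all_boot all_order all_algebra.
From mathcomp Require Import all_classical all_reals all_analysis.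
Set Implicit Arguments. Unset Strict Implicit. Unset Printing Implicit Defensive.
Import Order.TTheory GRing.Theory Num.Theory.
Import numFieldNormedType.Exports.
Local Open Scope classical_set_scope.
Local Open Scope ring_scope.

(* Vectors of R^d are column vectors 'cV[R]_d. Rounds are indexed by t >= 1. *)

Definition dotp {R : realType} {d : nat} (u v : 'cV[R]_d) : R :=
  (u^T *m v) ord0 ord0.

Definition enorm {R : realType} {d : nat} (v : 'cV[R]_d) : R :=
  Num.sqrt (dotp v v).

Definition mnorm {R : realType} {d : nat} (M : 'M[R]_d) (v : 'cV[R]_d) : R :=
  Num.sqrt (dotp v (M *m v)).

Definition Vmat {R : realType} {d : nat} (lam : R) (x : nat -> 'cV[R]_d)
    (t : nat) : 'M[R]_d :=
  lam%:M + \sum_(1 <= k < t) (x k *m (x k)^T).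

(* regularized least-squares estimate V_t^{-1} sum_{k<t} x_k obs_k *)
Definition est {R : realType} {d : nat} (lam : R) (x : nat -> 'cV[R]_d)
    (obs : nat -> R) (t : nat) : 'cV[R]_d :=
  invmx (Vmat lam x t) *m \sum_(1 <= k < t) (obs k *: x k).

Definition beta {R : realType} (d : nat) (rho lam delta S : R) (t : nat) : R :=
  rho * Num.sqrt (d%:R * ln ((1 + (t.-1)%:R / lam) / (delta / 2)))
  + Num.sqrt lam * S.

Definition star_convex0 {R : realType} {d : nat} (X : set 'cV[R]_d) : Prop :=
  forall v c, X v -> 0 <= c <= 1 -> X (c *: v).

Definition is_max {R : realType} (A : set R) (m : R) : Prop :=
  A m /\ forall m', A m' -> m' <= m.

Definition is_argmax {R : realType} {T : Type} (f : T -> R) (A : set T) (v : T)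
  : Prop := A v /\ forall w, A w -> f w <= f v.

(* tilde b_t = min(nu / ||tilde x_t||, 1), with the convention nu/0 = +oo *)
Definition btilde {R : realType} {d : nat} (nu : R) (xt : 'cV[R]_d) : R :=
  if enorm xt == 0 then 1 else Num.min (nu / enorm xt) 1.

Section Roful.
Context {R : realType} {d : nat}.
Variables (X : set 'cV[R]_d) (theta a : 'cV[R]_d) (b rho lam delta S : R).
Variables (x : nat -> 'cV[R]_d) (eps eta : nat -> R).

Definition yobs (k : nat) : R := dotp theta (x k) + eps k.
Definition zobs (k : nat) : R := dotp a (x k) + eta k.

Definition Vinv (t : nat) : 'M[R]_d := invmx (Vmat lam x t).
Definition ahat (t : nat) : 'cV[R]_d := est lam x zobs t.
Definition thhat (t : nat) : 'cV[R]_d := est lam x yobs t.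
Definition bt (t : nat) : R := beta d rho lam delta S t.

Definition Yp (t : nat) : set 'cV[R]_d :=
  [set v | X v /\ dotp (ahat t) v + bt t * mnorm (Vinv t) v <= b].
Definition Yo (t : nat) : set 'cV[R]_d :=
  [set v | X v /\ dotp (ahat t) v - bt t * mnorm (Vinv t) v <= b].

Definition ucb (t : nat) (v : 'cV[R]_d) : R :=
  dotp (thhat t) v + bt t * mnorm (Vinv t) v.

Definition E_conf : Prop :=
  forall t, (1 <= t)%N -> forall v, X v ->
    `|dotp v (thhat t - theta)| <= bt t * mnorm (Vinv t) v /\
    `|dotp v (ahat t - a)| <= bt t * mnorm (Vinv t) v.

End Roful.

From HB Require Import structures.
From mathcomp Require Import all_boot all_order all_algebra.
From mathcomp Require Import all_classical all_reals all_analysis.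
From mathcomp Require Import lra.
Import Order.TTheory GRing.Theory Num.Theory.
Import numFieldNormedType.Exports.
Local Open Scope classical_set_scope.
Local Open Scope ring_scope.

(* Along the ray through [xt_t] both safe sets are cut out by linear conditions
   on the scale.  With [p = ahat_t^T xt_t] and [c = beta_t ||xt_t||_{V_t^-1}],
   optimism of [xt_t] gives [p - c <= b], and by star-convexity [mu_t]
   dominates every scale [m <= 1] with [m (p + c) <= b].  Hence either
   [mu_t >= 1], or [mu_t (p + c) >= b], so that [b <= mu_t (b + 2 c)], i.e.
   [mu_t >= 1 - 2 c mu_t / b].  As [x_t = gamma_t xt_t] with [gamma_t >= mu_t],
   this is the first bound; the second is [gamma_t >= btilde_t >= nu], since
   [||xt_t|| <= 1]. *)

Lemma dotpZr (R : realType) (d : nat) (u v : 'cV[R]_d) (c : R) :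
  dotp u (c *: v) = c * dotp u v.
Proof. by rewrite /dotp -scalemxAr mxE. Qed.

Lemma dotpZl (R : realType) (d : nat) (u v : 'cV[R]_d) (c : R) :
  dotp (c *: u) v = c * dotp u v.
Proof. by rewrite /dotp linearZ /= -scalemxAl mxE. Qed.

Lemma mnormZ (R : realType) (d : nat) (M : 'M[R]_d) (v : 'cV[R]_d) (c : R) :
  0 <= c -> mnorm M (c *: v) = c * mnorm M v.
Proof.
move=> c_ge0; rewrite /mnorm -scalemxAr dotpZr dotpZl mulrA -expr2.
by rewrite sqrtrM ?sqr_ge0 // sqrtr_sqr ger0_norm.
Qed.

Lemma beta_ge0 (R : realType) (d : nat) (rho lam delta S : R) (t : nat) :
  0 <= rho -> 0 <= S -> 0 <= beta d rho lam delta S t.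
Proof. by move=> rho_ge0 S_ge0; rewrite addr_ge0 ?mulr_ge0 ?sqrtr_ge0. Qed.

Lemma btilde_ge (R : realType) (d : nat) (nu : R) (v : 'cV[R]_d) :
  0 <= nu <= 1 -> enorm v <= 1 -> nu <= btilde nu v.
Proof.
move=> /andP[nu_ge0 nu_le1] v_le1; rewrite /btilde; case: eqP => // /eqP v_neq0.
have v_gt0 : 0 < enorm v by rewrite lt_neqAle eq_sym v_neq0 sqrtr_ge0.
by rewrite le_min nu_le1 andbT ler_pdivlMr // ler_piMr.
Qed.

Lemma Yp_scale (R : realType) (d : nat) (X : set 'cV[R]_d) (a : 'cV[R]_d)
    (b rho lam delta S : R) (x : nat -> 'cV[R]_d) (eta : nat -> R) (t : nat)
    (v : 'cV[R]_d) (m : R) :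
  0 <= m ->
  Yp X a b rho lam delta S x eta t (m *: v) <->
  X (m *: v) /\
  m * (dotp (ahat a lam x eta t) v +
       beta d rho lam delta S t * mnorm (invmx (Vmat lam x t)) v) <= b.
Proof.
by move=> m_ge0; rewrite /Yp /= dotpZr /Vinv /bt mnormZ // mulrDr mulrCA.
Qed.

Lemma max_scale_ge (R : realFieldType) (b p c mu : R) :
  0 < b -> 0 <= c -> p - c <= b ->
  (forall m, 0 <= m <= 1 -> m * (p + c) <= b -> m <= mu) ->
  1 - 2 / b * c * mu <= mu.
Proof.
move=> b_gt0 c_ge0 p_le mu_max.
have [feasible | infeasible] := leP (p + c) b.
  have mu_ge1 : 1 <= mu by apply: mu_max; rewrite ?ler01 ?lexx ?mul1r.
  have : 0 <= 2 / b * c * mu.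
    by rewrite !mulr_ge0 ?invr_ge0 ?(ltW b_gt0) ?(le_trans ler01 mu_ge1).
  lra.
have pc_gt0 : 0 < p + c by exact: lt_trans infeasible.
have : b / (p + c) <= mu.
  apply: mu_max; last by rewrite divfK ?gt_eqF.
  by rewrite divr_ge0 ?(ltW b_gt0) ?(ltW pc_gt0) //= ler_pdivrMr // mul1r ltW.
rewrite ler_pdivrMr // => b_le.
have mu_gt0 : 0 < mu by rewrite -(pmulr_lgt0 _ pc_gt0) (lt_le_trans b_gt0 b_le).
rewrite -(ler_pM2l b_gt0) mulrBr mulr1 !mulrA (mulrC b 2) mulfK ?gt_eqF //.
nra.
Qed.

Theorem lemma2 (R : realType) (d : nat) (X : set 'cV[R]_d)
  (theta a : 'cV[R]_d) (b Sa Sth rho delta lam : R) (T : nat)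
  (x xt : nat -> 'cV[R]_d) (eps eta mu : nat -> R) (xstar : 'cV[R]_d) :
  (* setting *)
  closed X ->
  star_convex0 X ->
  (forall v, X v -> enorm v <= 1) ->
  0 < b ->
  0 < Sa -> enorm a <= Sa -> enorm theta <= Sth ->
  b / Sa <= 1 ->
  0 < rho -> 0 < delta < 1 -> 1 <= lam ->
  is_argmax (dotp theta) [set v | X v /\ dotp a v <= b] xstar ->
  0 < dotp theta xstar ->
  (* ROFUL *)
  (forall t, (1 <= t)%N ->
     let S := Num.max Sa Sth in
     is_argmax (ucb theta rho lam delta S x eps t)
               (Yo X a b rho lam delta S x eta t) (xt t) /\
     is_max [set m | 0 <= m <= 1 /\
                     Yp X a b rho lam delta S x eta t (m *: xt t)] (mu t) /\
     x t = Num.max (btilde (b / Sa) (xt t)) (mu t) *: xt t) ->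
  (* on the event E_conf *)
  E_conf X theta a rho lam delta (Num.max Sa Sth) x eps eta ->
  forall t, (1 <= t <= T)%N ->
    Num.max (1 - 2 / b * beta d rho lam delta (Num.max Sa Sth) t *
                     mnorm (invmx (Vmat lam x t)) (x t))
            (b / Sa)
    <= Num.max (btilde (b / Sa) (xt t)) (mu t).
Proof.
move=> _ starX normX b_gt0 Sa_gt0 _ _ nu_le1 rho_gt0 _ _ _ _ roful _ t
  /andP[t_ge1 _].
move: (roful t t_ge1); cbv zeta => -[[[Xxt Yo_xt] _] [[_ mu_max] ->]].
set S := Num.max Sa Sth in Yo_xt mu_max *.
set B := beta d rho lam delta S t; set q := mnorm (invmx (Vmat lam x t)) (xt t).
set g := Num.max (btilde (b / Sa) (xt t)) (mu t).
have nu_ge0 : 0 <= b / Sa by rewrite divr_ge0 ?ltW.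
have nu_le_g : b / Sa <= g by rewrite /g le_max btilde_ge ?nu_ge0 ?normX.
have mu_le_g : mu t <= g by rewrite /g le_max lexx orbT.
have B_ge0 : 0 <= B by rewrite beta_ge0 ?(ltW rho_gt0) // /S le_max (ltW Sa_gt0).
have Bq_ge0 : 0 <= B * q by rewrite mulr_ge0 ?sqrtr_ge0.
have mu_bound : 1 - 2 / b * (B * q) * mu t <= mu t.
  apply: (@max_scale_ge _ b (dotp (ahat a lam x eta t) (xt t))) => // m m01 m_ok.
  apply: mu_max; split => //; apply/Yp_scale; first by case/andP: m01.
  by split; first exact: starX.
rewrite mnormZ ?(le_trans nu_ge0 nu_le_g) // ge_max nu_le_g andbT.
have : 0 <= 2 / b * (B * q) * (g - mu t).
  by rewrite mulr_ge0 ?subr_ge0 // mulr_ge0 // divr_ge0 ?(ltW b_gt0).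
rewrite -/q !mulrA in mu_bound *; lra.
Qed.
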